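(* Let $K,G,m_0,A_g,B_g,\bar f_c,\bar f_t>0$, $e\in[0.5,1]$, and let $m_g(p)=A_gB_g\bar f_c\,e^{\frac{p-\bar f_t/3}{B_g\bar f_c}}$, so $m_g'(p)=A_g e^{\frac{p-\bar f_t/3}{B_g\bar f_c}}$. Let $\hat f(p,\varrho,\varrho_e)=\frac32\left(\frac{\varrho}{\bar f_c}\right)^2+m_0\left(\frac{\varrho_e}{\sqrt6\bar f_c}+\frac{p}{\bar f_c}\right)-1$. Let $\boldsymbol\sigma^{tr}\in\mathbb R^{3\times3}_{sym}$ be given with $p^{tr}=p(\boldsymbol\sigma^{tr})$, $\mathbf s^{tr}=\mathbf s(\boldsymbol\sigma^{tr})$, $\varrho^{tr}=\|\mathbf s^{tr}\|$, $\mathbf n^{tr}=\mathbf s^{tr}/\varrho^{tr}$, $\theta^{tr}=\theta(\boldsymbol\sigma^{tr})$, $r_e^{tr}=r_e(\cos\theta^{tr})$, $\varrho_e^{tr}=\varrho_e(\boldsymbol\sigma^{tr})$, and assume $\hat f(p^{tr},\varrho^{tr},\varrho_e^{tr})>0$. Consider the problem (P): find $\boldsymbol\sigma\in\mathbb R^{3\times3}_{sym}$ and $\triangle\lambda$ with $$\boldsymbol\sigma=\boldsymbol\sigma^{tr}-\triangle\lambda\Big[K\tfrac{m_g'(p(\boldsymbol\sigma))}{\bar f_c}\mathbf I+2G\Big(\tfrac{3\varrho(\boldsymbol\sigma)}{\bar f_c^2}+\tfrac{m_0}{\sqrt6\bar f_c}\Big)\hat{\mathbf n}\Big]\ \text{for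 some }\hat{\mathbf n}\in\partial\varrho(\boldsymbol\sigma),$$ $\triangle\lambda\ge0$, $\hat f(p(\boldsymbol\sigma),\varrho(\boldsymbol\sigma),\varrho_e(\boldsymbol\sigma))\le0$, $\triangle\lambda\hat f(p(\boldsymbol\sigma),\varrho(\boldsymbol\sigma),\varrho_e(\boldsymbol\sigma))=0$. If $(\boldsymbol\sigma,\triangle\lambda)$ solves (P) and $p=p(\boldsymbol\sigma)$, $\varrho=\varrho(\boldsymbol\sigma)$, then $(p,\varrho,\triangle\lambda)$ solves the system (R): $$p=p^{tr}-\triangle\lambda K\tfrac{m_g'(p)}{\bar f_c},\quad \varrho=\Big[\varrho^{tr}-\triangle\lambda 2G\Big(\tfrac{3\varrho}{\bar f_c^2}+\tfrac{m_0}{\sqrt6\bar f_c}\Big)\Big]^+,\quad \hat f(p,\varrho,\varrho r_e^{tr})=0.$$ Conversely, if $(p,\varrho,\triangle\lambda)$ solves (R), then $(\boldsymbol\sigma,\triangle\lambda)$ solves (P), where $\boldsymbol\sigma=p\mathbf I+\varrho\mathbf n^{tr}$ if $\varrho^{tr}>\triangle\lambda2G\big(\frac{3\varrho}{\bar f_c^2}+\frac{m_0}{\sqrt6\bar f_c}\big)$ and $\boldsymbol\sigma=p\mathbf I$ otherwise.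
   Context: $\mathbb R^{3\times3}_{sym}$: real symmetric $3\times3$ matrices with Frobenius product '':'' and norm; $\mathbf I$ identity; $p(\boldsymbol\sigma)=\frac13\mathbf I:\boldsymbol\sigma$, $\mathbf s(\boldsymbol\sigma)=\boldsymbol\sigma-p(\boldsymbol\sigma)\mathbf I$, $\varrho(\boldsymbol\sigma)=\|\mathbf s(\boldsymbol\sigma)\|$; for $\varrho(\boldsymbol\sigma)>0$, $\theta(\boldsymbol\sigma)=\frac13\arccos\big(\frac{3\sqrt3}{2}J_3/J_2^{3/2}\big)$ with $J_2=\frac12\mathbf s:\mathbf s$, $J_3=\frac13\mathbf s^3:\mathbf I$. $r_e(\cos\theta)=\frac{4(1-e^2)\cos^2\theta+(2e-1)^2}{2(1-e^2)\cos\theta+(2e-1)\sqrt{4(1-e^2)\cos^2\theta+5e^2-4e}}$; $\varrho_e(\boldsymbol\sigma)=\varrho(\boldsymbol\sigma)r_e(\cos\theta(\boldsymbol\sigma))$ if $\varrho(\boldsymbol\sigma)>0$ and $0$ otherwise. When $\varrho^{tr}=0$ the quantity $\varrho r_e^{tr}$ is interpreted as $0$. $(x)^+=\max\{0,x\}$. $\partial\varrho(\boldsymbol\sigma)=\{\mathbf s(\boldsymbol\sigma)/\varrho(\boldsymbol\sigma)\}$ if $\varrho(\boldsymbol\sigma)>0$, and $\{\hat{\mathbf n}\in\mathbb R^{3\times3}_{sym}:\mathbf I:\hat{\mathbf n}=0,\|\hat{\mathbf n}\|\le1\}$ if $\varrho(\boldsymbol\sigma)=0$. *)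

From HB Require Import structures.
From mathcomp Require Import all_boot all_order all_algebra.
From mathcomp Require Import all_classical all_reals all_analysis.
Set Implicit Arguments. Unset Strict Implicit. Unset Printing Implicit Defensive.
Import Order.TTheory GRing.Theory Num.Theory.
Local Open Scope ring_scope.

Section Defs.
Variable R : realType.
Local Notation M := 'M[R]_3.

Definition symmx (A : M) : Prop := A^T = A.
Definition frob (A B : M) : R := \sum_(i < 3) \sum_(j < 3) A i j * B i j.
Definition fnorm (A : M) : R := Num.sqrt (frob A A).
Definition Imx : M := 1%:M.
Definition pmean (S : M) : R := 3^-1 * frob Imx S.
Definition dev (S : M) : M := S - (pmean S) *: Imx.
Definition rho (S : M) : R := fnorm (dev S).
Definition J2 (S : M) : R := 2^-1 * frob (dev S) (dev S).
Definition J3 (S : M) : R := 3^-1 * frob (dev S *m dev S *m dev S) Imx.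
(* J2^{3/2} = J2 * sqrt J2 (J2 >= 0) *)
Definition lode (S : M) : R :=
  3^-1 * acos ((3 * Num.sqrt 3 / 2) * J3 S / (J2 S * Num.sqrt (J2 S))).
Definition r_e (e c : R) : R :=
  (4 * (1 - e ^+ 2) * c ^+ 2 + (2 * e - 1) ^+ 2) /
  (2 * (1 - e ^+ 2) * c
   + (2 * e - 1) * Num.sqrt (4 * (1 - e ^+ 2) * c ^+ 2 + 5 * e ^+ 2 - 4 * e)).
Definition rho_e (e : R) (S : M) : R :=
  if 0 < rho S then rho S * r_e e (cos (lode S)) else 0.
Definition subdiff_rho (S nh : M) : Prop :=
  if 0 < rho S then nh = (rho S)^-1 *: dev S
  else symmx nh /\ frob Imx nh = 0 /\ fnorm nh <= 1.
Definition pos_part (x : R) : R := Num.max 0 x.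
Definition dmg (Ag Bg fc ft p : R) : R := Ag * expR ((p - ft / 3) / (Bg * fc)).
Definition fhat (m0 fc p r re : R) : R :=
  3 / 2 * (r / fc) ^+ 2 + m0 * (re / (Num.sqrt 6 * fc) + p / fc) - 1.

Definition probP (K G m0 Ag Bg fc ft e : R) (Str S : M) (dl : R) : Prop :=
  symmx S /\
  (exists nh : M, subdiff_rho S nh /\
     S = Str - dl *: (K * dmg Ag Bg fc ft (pmean S) / fc) *: Imx
             - dl *: ((2 * G * (3 * rho S / fc ^+ 2 + m0 / (Num.sqrt 6 * fc))) *: nh))
  /\ 0 <= dl
  /\ fhat m0 fc (pmean S) (rho S) (rho_e e S) <= 0
  /\ dl * fhat m0 fc (pmean S) (rho S) (rho_e e S) = 0.

(* varrho * r_e^tr, interpreted as 0 when rho^tr = 0 *)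
Definition rho_retr (e : R) (Str : M) (r : R) : R :=
  if 0 < rho Str then r * r_e e (cos (lode Str)) else 0.

Definition sysR (K G m0 Ag Bg fc ft e : R) (Str : M) (p r dl : R) : Prop :=
  p = pmean Str - dl * K * dmg Ag Bg fc ft p / fc
  /\ r = pos_part (rho Str - dl * 2 * G * (3 * r / fc ^+ 2 + m0 / (Num.sqrt 6 * fc)))
  /\ fhat m0 fc p r (rho_retr e Str r) = 0.

Definition sigma_of (G m0 fc : R) (Str : M) (p r dl : R) : M :=
  if dl * 2 * G * (3 * r / fc ^+ 2 + m0 / (Num.sqrt 6 * fc)) < rho Str
  then p *: Imx + r *: ((rho Str)^-1 *: dev Str)
  else p *: Imx.
End Defs.

(** The deviatoric part of the return-mapping equation reads
  [dev σ = dev σ^tr - t n̂] with [t ≥ 0] and [n̂ ∈ ∂ρ(σ)].  If [ρ(σ) > 0] then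
  [n̂ = dev σ / ρ(σ)], so [dev σ^tr = (1 + t/ρ(σ)) dev σ]: the return is
  radial, preserves the Lode angle, and [ρ(σ^tr) = ρ(σ) + t].  If [ρ(σ) = 0]
  then [dev σ^tr = t n̂] with [|n̂| ≤ 1], so [ρ(σ^tr) ≤ t].  Either way
  [ρ(σ) = (ρ(σ^tr) - t)^+], and the hydrostatic part is the scalar equation
  for [p].  As the trial stress is not admissible, [Δλ > 0], so
  complementarity forces [f̂ = 0].  Conversely, a solution of (R) yields [σ]
  by the same radial formula, with subgradient [dev σ^tr / t] when the return
  ends at the apex. *)
From HB Require Import structures.
From mathcomp Require Import all_boot all_order all_algebra.
From mathcomp Require Import all_classical all_reals all_analysis.
From mathcomp Require Import ring lra.
Import Order.TTheory GRing.Theory Num.Theory.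
Local Open Scope ring_scope.

Section Frobenius.
Context {R : realType}.
Implicit Types (A B C : 'M[R]_3) (a : R).

Lemma frobDl A B C : frob (A + B) C = frob A C + frob B C.
Proof.
rewrite /frob -big_split; apply: eq_bigr => i _.
by rewrite -big_split; apply: eq_bigr => j _; rewrite mxE mulrDl.
Qed.

Lemma frobZl a A B : frob (a *: A) B = a * frob A B.
Proof.
rewrite /frob mulr_sumr; apply: eq_bigr => i _.
by rewrite mulr_sumr; apply: eq_bigr => j _; rewrite mxE mulrA.
Qed.

Lemma frobC A B : frob A B = frob B A.
Proof. by rewrite /frob; apply: eq_bigr => i _; apply: eq_bigr => j _; rewrite mulrC. Qed.

Lemma frobDr A B C : frob A (B + C) = frob A B + frob A C.
Proof. by rewrite frobC frobDl !(frobC A). Qed.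

Lemma frobZr a A B : frob A (a *: B) = a * frob A B.
Proof. by rewrite frobC frobZl frobC. Qed.

Lemma frobII : frob (Imx R) (Imx R) = 3.
Proof. by rewrite /frob /Imx !big_ord_recr !big_ord0 /= !mxE /=; ring. Qed.

Lemma frob_ge0 A : 0 <= frob A A.
Proof. by apply: sumr_ge0 => i _; apply: sumr_ge0 => j _; rewrite -expr2 sqr_ge0. Qed.

Lemma frob_eq0 A : frob A A = 0 -> A = 0.
Proof.
move=> A0; apply/matrixP => i j; rewrite mxE.
have xx_ge0 (x : R) : 0 <= x * x by rewrite -expr2 sqr_ge0.
have row0 : \sum_(k < 3) A i k * A i k = 0.
  by apply: (psumr_eq0P _ A0) => // k _; apply: sumr_ge0.
have := psumr_eq0P (fun k _ => xx_ge0 (A i k)) row0.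
by move=> /(_ j isT) /eqP; rewrite mulf_eq0 orbb => /eqP.
Qed.

Lemma fnormZ a A : fnorm (a *: A) = `|a| * fnorm A.
Proof.
by rewrite /fnorm frobZl frobZr mulrA sqrtrM -expr2 ?sqr_ge0 // sqrtr_sqr.
Qed.

Lemma fnorm0 : fnorm (0 : 'M[R]_3) = 0.
Proof. by rewrite -(scale0r (0 : 'M[R]_3)) fnormZ normr0 mul0r. Qed.

Lemma fnorm_eq0 A : fnorm A = 0 -> A = 0.
Proof.
move/eqP; rewrite sqrtr_eq0 => A0; apply: frob_eq0.
by apply/eqP; rewrite eq_le A0 frob_ge0.
Qed.

End Frobenius.

Section HydrostaticDeviatoric.
Context {R : realType}.
Implicit Types (A B : 'M[R]_3) (a : R).

Lemma pmeanD A B : pmean (A + B) = pmean A + pmean B.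
Proof. by rewrite /pmean frobDr mulrDr. Qed.

Lemma pmeanZ a A : pmean (a *: A) = a * pmean A.
Proof. by rewrite /pmean frobZr mulrCA. Qed.

Lemma pmeanN A : pmean (- A) = - pmean A.
Proof. by rewrite -scaleN1r pmeanZ mulN1r. Qed.

Lemma pmeanI : pmean (Imx R) = 1.
Proof. by rewrite /pmean frobII mulVf. Qed.

Lemma pmean_dev A : pmean (dev A) = 0.
Proof. by rewrite /dev pmeanD pmeanN pmeanZ pmeanI mulr1 subrr. Qed.

Lemma frobI_dev A : frob (Imx R) (dev A) = 0.
Proof.
by move: (pmean_dev A); rewrite /pmean => /eqP; rewrite mulf_eq0 invr_eq0 pnatr_eq0 => /eqP.
Qed.

Lemma devD A B : dev (A + B) = dev A + dev B.
Proof. by rewrite /dev pmeanD scalerDl opprD addrACA. Qed.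

Lemma devZ a A : dev (a *: A) = a *: dev A.
Proof. by rewrite /dev pmeanZ scalerBr scalerA. Qed.

Lemma devN A : dev (- A) = - dev A.
Proof. by rewrite -scaleN1r devZ scaleN1r. Qed.

Lemma devI : dev (Imx R) = 0.
Proof. by rewrite /dev pmeanI scale1r subrr. Qed.

Lemma dev_id A : pmean A = 0 -> dev A = A.
Proof. by move=> A0; rewrite /dev A0 scale0r subr0. Qed.

Lemma pmean_devK A : pmean A *: Imx R + dev A = A.
Proof. by rewrite /dev addrC subrK. Qed.

Lemma rho_ge0 A : 0 <= rho A.
Proof. exact: sqrtr_ge0. Qed.

Lemma rho_eq0 A : rho A = 0 -> dev A = 0.
Proof. exact: fnorm_eq0. Qed.

Lemma rho_devZ a A B : 0 <= a -> dev A = a *: dev B -> rho A = a * rho B.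
Proof. by move=> a0 AB; rewrite /rho AB fnormZ ger0_norm. Qed.

Lemma symmxD A B : symmx A -> symmx B -> symmx (A + B).
Proof. by rewrite /symmx => hA hB; rewrite linearD /= hA hB. Qed.

Lemma symmxZ a A : symmx A -> symmx (a *: A).
Proof. by rewrite /symmx => hA; rewrite linearZ /= hA. Qed.

Lemma symmxI : symmx (Imx R).
Proof. by rewrite /symmx /Imx trmx1. Qed.

Lemma symmx_dev A : symmx A -> symmx (dev A).
Proof.
move=> hA; apply: symmxD => //.
by rewrite /symmx linearN /= (symmxZ _ _ symmxI).
Qed.

Lemma return_mapE A Atr nh a b : pmean nh = 0 ->
  (A = Atr - a *: Imx R - b *: nh) <->
  (pmean A = pmean Atr - a /\ dev A = dev Atr - b *: nh).
Proof.
move=> nh0; split=> [->|[pA dA]].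
  rewrite !pmeanD !pmeanN !pmeanZ pmeanI nh0 !devD !devN !devZ devI (dev_id _ nh0).
  by rewrite mulr1 mulr0 subr0 scaler0 subr0.
rewrite -(pmean_devK A) pA dA -{3}(pmean_devK Atr) scalerBl.
by rewrite addrACA !addrA.
Qed.

End HydrostaticDeviatoric.

Section LodeAngle.
Context {R : realType}.
Implicit Types (A B : 'M[R]_3) (c e : R).

(* Also outside [-1, 1], where [acos] takes the junk value [0]. *)
Lemma acos_bounds (x : R) : 0 <= acos x <= pi.
Proof.
rewrite unlock; case: xgetP => [y -> [] //|_].
by rewrite /= le_refl pi_ge0.
Qed.

Lemma cos_lode_ge0 A : 0 <= cos (lode A).
Proof.
apply: cos_ge0_pihalf; rewrite /lode.
move: (acos_bounds ((3 * Num.sqrt 3 / 2) * J3 A / (J2 A * Num.sqrt (J2 A)))).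
by have := pi_ge0 R; move=> pi0 /andP[? ?]; apply/andP; split; lra.
Qed.

Lemma r_e_ge0 e c : 2^-1 <= e <= 1 -> 0 <= c -> 0 <= r_e e c.
Proof.
move=> /andP[e_ge e_le] c0; have e2_le1 : 0 <= 1 - e ^+ 2 by nra.
apply: divr_ge0; first by rewrite addr_ge0 ?sqr_ge0 // !mulr_ge0 // sqr_ge0.
by rewrite addr_ge0 ?mulr_ge0 ?sqrtr_ge0 //; lra.
Qed.

Lemma J2Z c A : J2 (c *: A) = c ^+ 2 * J2 A.
Proof. by rewrite /J2 devZ frobZl frobZr; ring. Qed.

Lemma J3Z c A : J3 (c *: A) = c ^+ 3 * J3 A.
Proof.
rewrite /J3 devZ -!scalemxAl -!scalemxAr -!scalemxAl !scalerA frobZl.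
by ring.
Qed.

Lemma lode_devZ c A B : 0 < c -> dev A = c *: dev B -> lode A = lode B.
Proof.
move=> c0 AB.
have -> : lode A = lode (c *: B) by rewrite /lode /J2 /J3 devZ AB.
rewrite /lode J2Z J3Z sqrtrM ?sqr_ge0 // sqrtr_sqr gtr0_norm //.
congr (_ * acos _).
have c3 : c ^+ 3 != 0 by rewrite expf_neq0 // gt_eqF.
have -> : c ^+ 2 * J2 B * (c * Num.sqrt (J2 B)) = c ^+ 3 * (J2 B * Num.sqrt (J2 B)).
  by ring.
rewrite invfM.
transitivity (c ^+ 3 / c ^+ 3 * (3 * Num.sqrt 3 / 2 * J3 B / (J2 B * Num.sqrt (J2 B))));
  by [ring | rewrite divff // mul1r].
Qed.

End LodeAngle.

Section RadialReturn.
Context {R : realType}.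
Implicit Types (S Str nh : 'M[R]_3) (e : R).

Lemma pos_part_ge0 (x : R) : 0 <= pos_part x.
Proof. by rewrite /pos_part le_max lexx. Qed.

Lemma pos_part_ge (x : R) : x <= pos_part x.
Proof. by rewrite /pos_part le_max lexx orbT. Qed.

Lemma pos_part_id (x : R) : 0 <= x -> pos_part x = x.
Proof. by move=> x0; rewrite /pos_part max_r. Qed.

Lemma pos_part_eq0 (x : R) : x <= 0 -> pos_part x = 0.
Proof. by move=> x0; rewrite /pos_part max_l. Qed.

Lemma subdiff_pmean S nh : subdiff_rho S nh -> pmean nh = 0.
Proof.
rewrite /subdiff_rho; case: ifP => _ => [->|[_ [nh0 _]]].
  by rewrite pmeanZ pmean_dev mulr0.
by rewrite /pmean nh0 mulr0.
Qed.

Section Return.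
Context {S Str nh : 'M[R]_3} {t : R}.
Hypotheses (t_ge0 : 0 <= t) (nh_sub : subdiff_rho S nh)
  (dev_return : dev S = dev Str - t *: nh).

Lemma dev_trial_radial : 0 < rho S -> dev Str = (1 + t / rho S) *: dev S.
Proof.
move=> rS0; move: nh_sub; rewrite /subdiff_rho rS0 => nhE.
by rewrite scalerDl scale1r -scalerA -nhE dev_return subrK.
Qed.

Lemma rho_trial_radial : 0 < rho S -> rho Str = rho S + t.
Proof.
move=> rS0; rewrite (rho_devZ _ _ _ _ (dev_trial_radial rS0)) ?mulrDl ?mul1r.
- by rewrite mulfVK ?gt_eqF.
- by rewrite addr_ge0 ?divr_ge0 ?rho_ge0.
Qed.

Lemma rho_return : rho S = pos_part (rho Str - t).
Proof.
have [rS0|] := ltP 0 (rho S).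
  by rewrite rho_trial_radial // addrK pos_part_id ?rho_ge0.
rewrite le_eqVlt ltNge rho_ge0 orbF => /eqP rS0.
move: nh_sub; rewrite /subdiff_rho rS0 ltxx => -[_ [_ nh_le1]].
have dStr : dev Str = t *: nh.
  by apply/eqP; rewrite -subr_eq0 -dev_return rho_eq0.
by rewrite pos_part_eq0 // subr_le0 /rho dStr fnormZ ger0_norm // ler_piMr.
Qed.

Lemma rho_e_return e : rho_retr e Str (rho S) = rho_e e S.
Proof.
rewrite /rho_retr /rho_e; have [rS0|rS_le0] := ltP 0 (rho S).
  have c0 : 0 < 1 + t / rho S by rewrite ltr_wpDr ?divr_ge0 ?rho_ge0.
  rewrite (lode_devZ _ _ _ c0 (dev_trial_radial rS0)) ifT //.
  by rewrite rho_trial_radial // ltr_wpDr.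
have -> : rho S = 0 by apply/eqP; rewrite eq_le rS_le0 rho_ge0.
by rewrite mul0r if_same.
Qed.

End Return.
End RadialReturn.

Section Reconstruction.
Context {R : realType} (e : R) {Str : 'M[R]_3} (p : R) {r t : R}.
Hypotheses (Str_sym : symmx Str) (t_gt0 : 0 < t)
  (r_return : r = pos_part (rho Str - t)).

Lemma radial_stress_spec
  (S := if t < rho Str then p *: Imx R + r *: ((rho Str)^-1 *: dev Str)
        else p *: Imx R) :
  [/\ symmx S, pmean S = p, rho S = r, rho_e e S = rho_retr e Str r &
      exists2 nh, subdiff_rho S nh & dev S = dev Str - t *: nh].
Proof.
rewrite {}/S; case: ltP => [t_lt|t_ge].
  have rE : r = rho Str - t by rewrite r_return pos_part_id // subr_ge0 ltW.
  have r_gt0 : 0 < r by rewrite rE subr_gt0.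
  have rStr_gt0 : 0 < rho Str by apply: lt_trans t_lt.
  have c_gt0 : 0 < r / rho Str by rewrite divr_gt0.
  set S := _ + _.
  have devS : dev S = (r / rho Str) *: dev Str.
    by rewrite devD !devZ devI scaler0 add0r dev_id ?pmean_dev // scalerA.
  have rhoS : rho S = r.
    by rewrite (rho_devZ _ _ _ (ltW c_gt0) devS) mulfVK ?gt_eqF.
  split.
  - apply: symmxD; first exact: (symmxZ _ _ symmxI).
    by do 2!apply: symmxZ; apply: symmx_dev.
  - by rewrite pmeanD !pmeanZ pmeanI pmean_dev !mulr0 mulr1 addr0.
  - exact: rhoS.
  - by rewrite /rho_e /rho_retr rhoS r_gt0 rStr_gt0 (lode_devZ _ _ _ c_gt0 devS).
  exists ((rho S)^-1 *: dev S); first by rewrite /subdiff_rho rhoS r_gt0.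
  rewrite rhoS devS !scalerA -[X in _ = X - _]scale1r -scalerBl; congr (_ *: _).
  by rewrite rE; field; rewrite !gt_eqF // -rE.
have r0 : r = 0 by rewrite r_return pos_part_eq0 // subr_le0.
have devS : dev (p *: Imx R) = 0 by rewrite devZ devI scaler0.
have rhoS : rho (p *: Imx R) = 0 by rewrite /rho devS fnorm0.
split.
- exact: (symmxZ _ _ symmxI).
- by rewrite pmeanZ pmeanI mulr1.
- by rewrite rhoS r0.
- by rewrite /rho_e /rho_retr rhoS ltxx r0 mul0r if_same.
exists (t^-1 *: dev Str); last by rewrite devS scalerA mulfV ?gt_eqF // scale1r subrr.
rewrite /subdiff_rho rhoS ltxx; split; first by apply: symmxZ; apply: symmx_dev.
split; first by rewrite frobZr frobI_dev mulr0.
by rewrite fnormZ gtr0_norm ?invr_gt0 // mulrC ler_pdivrMr // mul1r.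
Qed.

End Reconstruction.

Section ScalarSystem.
Context {R : realType}.

Lemma flow_coef_gt0 (m0 fc r : R) : 0 < m0 -> 0 < fc -> 0 <= r ->
  0 < 3 * r / fc ^+ 2 + m0 / (Num.sqrt 6 * fc).
Proof.
move=> m0_gt0 fc_gt0 r_ge0; apply: ltr_wpDl.
  by rewrite !mulr_ge0 // invr_ge0 exprn_ge0 // ltW.
by rewrite divr_gt0 // mulr_gt0 // sqrtr_gt0.
Qed.

Lemma fhat_le (m0 fc p1 p2 r1 r2 q1 q2 : R) : 0 < m0 -> 0 < fc ->
  p1 <= p2 -> 0 <= r1 <= r2 -> q1 <= q2 ->
  fhat m0 fc p1 r1 q1 <= fhat m0 fc p2 r2 q2.
Proof.
move=> m0_gt0 fc_gt0 p12 /andP[r1_ge0 r12] q12; rewrite /fhat lerD2r.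
have fc_inv : 0 <= fc^-1 by rewrite invr_ge0 ltW.
apply: lerD.
  have r12' : r1 / fc <= r2 / fc by rewrite ler_wpM2r.
  have r1' : 0 <= r1 / fc by rewrite mulr_ge0.
  by rewrite ler_wpM2l // ler_sqr ?nnegrE // (le_trans r1').
have s6_inv : 0 <= (Num.sqrt 6 * fc)^-1 by rewrite invr_ge0 mulr_ge0 ?sqrtr_ge0 ?ltW.
apply: ler_wpM2l; first exact: ltW.
by apply: lerD; apply: ler_wpM2r.
Qed.

Lemma rho_retr_le (e : R) (Str : 'M[R]_3) (r1 r2 : R) :
  2^-1 <= e <= 1 -> r1 <= r2 -> rho_retr e Str r1 <= rho_retr e Str r2.
Proof.
move=> e_range r12; rewrite /rho_retr; case: ifP => // _.
by rewrite ler_wpM2r // r_e_ge0 // cos_lode_ge0.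
Qed.

(* For [dl <= 0] both [p] and [r] lie beyond their trial values, where [fhat]
   is already positive. *)
Lemma sysR_dl_gt0 (K G m0 Ag Bg fc ft e : R) (Str : 'M[R]_3) (p r dl : R) :
  0 < K -> 0 < G -> 0 < m0 -> 0 < Ag -> 0 < fc -> 2^-1 <= e <= 1 ->
  0 < fhat m0 fc (pmean Str) (rho Str) (rho_e e Str) ->
  sysR K G m0 Ag Bg fc ft e Str p r dl -> 0 < dl.
Proof.
move=> K_gt0 G_gt0 m0_gt0 Ag_gt0 fc_gt0 e_range f_trial [p_eq [r_eq f_eq0]].
rewrite ltNge; apply/negP => dl_le0.
have r_ge0 : 0 <= r by rewrite r_eq pos_part_ge0.
have p_ge : pmean Str <= p.
  have coef_ge0 : 0 <= K * dmg Ag Bg fc ft p / fc.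
    by rewrite divr_ge0 ?mulr_ge0 // ?ltW // expR_ge0.
  by rewrite [X in _ <= X]p_eq; nra.
have r_ge : rho Str <= r.
  have coef_ge0 : 0 <= 2 * G * (3 * r / fc ^+ 2 + m0 / (Num.sqrt 6 * fc)).
    by rewrite !mulr_ge0 // ltW // flow_coef_gt0.
  by rewrite r_eq (le_trans _ (pos_part_ge _)) //; nra.
have : fhat m0 fc (pmean Str) (rho Str) (rho_retr e Str (rho Str))
       <= fhat m0 fc p r (rho_retr e Str r).
  by rewrite fhat_le ?rho_ge0 ?rho_retr_le.
by rewrite f_eq0 leNgt f_trial.
Qed.

End ScalarSystem.

Section ReturnMapping.
Context {R : realType} (K G m0 Ag Bg fc ft e : R) (Str : 'M[R]_3).
Hypotheses (K_gt0 : 0 < K) (G_gt0 : 0 < G) (m0_gt0 : 0 < m0) (Ag_gt0 : 0 < Ag)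
  (fc_gt0 : 0 < fc) (e_range : 2^-1 <= e <= 1) (Str_sym : symmx Str)
  (f_trial : 0 < fhat m0 fc (pmean Str) (rho Str) (rho_e e Str)).

Lemma probP_sysR S dl : probP K G m0 Ag Bg fc ft e Str S dl ->
  sysR K G m0 Ag Bg fc ft e Str (pmean S) (rho S) dl.
Proof.
move=> [_ [[nh [nh_sub S_return]] [dl_ge0 [f_le0 f_compl]]]].
set t := dl * 2 * G * (3 * rho S / fc ^+ 2 + m0 / (Num.sqrt 6 * fc)).
have t_ge0 : 0 <= t by rewrite !mulr_ge0 // ltW // flow_coef_gt0 ?rho_ge0.
have dl_neq0 : dl != 0.
  apply: contraTneq f_trial => dl0; rewrite -leNgt.
  by move: S_return f_le0; rewrite dl0 !scale0r !subr0 => <-.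
have {f_le0 f_compl} f_eq0 : fhat m0 fc (pmean S) (rho S) (rho_e e S) = 0.
  by apply/eqP; move/eqP: f_compl; rewrite mulf_eq0 (negbTE dl_neq0).
move: S_return; rewrite [dl *: (_ *: nh)]scalerA.
rewrite (return_mapE _ _ _ _ _ (subdiff_pmean _ _ nh_sub)) => -[p_return dev_return].
have {}dev_return : dev S = dev Str - t *: nh by rewrite dev_return /t mulrA mulrA.
split; first by rewrite [LHS]p_return -[dl *: _]/(dl * _); ring.
split; first exact: rho_return t_ge0 nh_sub dev_return.
by rewrite (rho_e_return t_ge0 nh_sub dev_return).
Qed.

Lemma sysR_probP p r dl : sysR K G m0 Ag Bg fc ft e Str p r dl ->
  probP K G m0 Ag Bg fc ft e Str (sigma_of G m0 fc Str p r dl) dl.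
Proof.
move=> sol; have dl_gt0 : 0 < dl by move: sol; apply: sysR_dl_gt0.
move: sol => [p_eq [r_eq f_eq0]].
set t := dl * 2 * G * (3 * r / fc ^+ 2 + m0 / (Num.sqrt 6 * fc)) in r_eq.
have t_gt0 : 0 < t by rewrite !mulr_gt0 // flow_coef_gt0 // r_eq pos_part_ge0.
have [S_sym pS rhoS rho_eS [nh nh_sub dev_return]] :=
  radial_stress_spec e p Str_sym t_gt0 r_eq.
rewrite /sigma_of -/t.
set S := if _ then _ else _ in S_sym pS rhoS rho_eS nh_sub dev_return *.
split=> //; split.
  exists nh; split => //.
  rewrite pS rhoS [dl *: (_ *: nh)]scalerA.
  have -> : dl * (2 * G * (3 * r / fc ^+ 2 + m0 / (Num.sqrt 6 * fc))) = t.
    by rewrite /t !mulrA.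
  apply/(return_mapE _ _ _ _ _ (subdiff_pmean _ _ nh_sub)); split => //.
  by rewrite pS {1}p_eq -[dl *: _]/(dl * _); ring.
by rewrite pS rhoS rho_eS f_eq0 mulr0 ltW.
Qed.

End ReturnMapping.

Theorem theorem5 (R : realType) (K G m0 Ag Bg fc ft e : R) (Str : 'M[R]_3) :
  0 < K -> 0 < G -> 0 < m0 -> 0 < Ag -> 0 < Bg -> 0 < fc -> 0 < ft ->
  2^-1 <= e <= 1 ->
  symmx Str ->
  0 < fhat m0 fc (pmean Str) (rho Str) (rho_e e Str) ->
  (forall (S : 'M[R]_3) (dl : R),
     probP K G m0 Ag Bg fc ft e Str S dl ->
     sysR K G m0 Ag Bg fc ft e Str (pmean S) (rho S) dl)
  /\
  (forall p r dl : R,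
     sysR K G m0 Ag Bg fc ft e Str p r dl ->
     probP K G m0 Ag Bg fc ft e Str (sigma_of G m0 fc Str p r dl) dl).
Proof.
move=> K_gt0 G_gt0 m0_gt0 Ag_gt0 _ fc_gt0 _ e_range Str_sym f_trial.
by split; [apply: probP_sysR | apply: sysR_probP].
Qed.
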